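(* Let $N=2^n$, fix a part $S_\beta$ (write $\beta=(S_\beta)$), and let $t$ be a random permutation of $\{0,\dots,N-1\}$ whose distribution is $\delta'$ non-$\beta$-uniform. Fix $\delta>0$ and $\gamma=2^{-m}$. Let $h$ be an arbitrary function on permutations and $r$ a value with $\Pr[h(t)=r]\ge\gamma$, and let $s$ denote $t$ conditioned on $h(t)=r$. Then there exist finitely many distributions $\mathbb{F}_i$, each $(p,\delta+\delta')$ non-$\beta$-uniform with $p=2m/\delta$, an arbitrary distribution $\mathbb{F}'$ on permutations and nonnegative weights $\alpha_i,\gamma'$ with $\sum_i\alpha_i+\gamma'=1$, $\gamma'\le\gamma$, such that the distribution of $s$ equals $\sum_i\alpha_i\mathbb{F}_i+\gamma'\mathbb{F}'$.
   Context: A part is a set $S=\{(x_i,y_i)\}_{i=1}^M$ such that some permutation $\pi$ of $\{0,\dots,N-1\}$ has $\pi(x_i)=y_i$ for all $i$; ''$S\subseteq\mathrm{parts}(t)$'' means $t(x_i)=y_i$ for all $i$. Parts $S,S'$ are distinct if they share no input and $S\cup S'$ is a part. Let $u$ be a uniformly random permutation. The $\beta$-uniform distribution (for $\beta=(S_\beta)$) is the law of $b:=u$ conditioned on $S_\beta\subseteq\mathrm{parts}(u)$. A random permutation $t$ is $\delta$ non-$\beta$-uniform if $\Pr[S\subseteq\mathrm{parts}(t)]\le2^{\delta|S|}\Pr[S\subseteq\mathrm{parts}(b)]$ for every part $S$. It is $(p,\delta)$ non-$\beta$-uniform if there is a part $S_0$ with $|S_0|\le p$ and $\Pr[S_0\subseteq\mathrm{parts}(t)]=1$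 such that for every part $S$ distinct from $S_0$, $\Pr[S\subseteq\mathrm{parts}(t)]\le2^{\delta|S|}\Pr[S\subseteq\mathrm{parts}(b)\mid S_0\subseteq\mathrm{parts}(b)]$. *)

From HB Require Import structures.
From mathcomp Require Import all_boot all_order all_algebra all_fingroup.
From mathcomp Require Import reals exp.
Set Implicit Arguments. Unset Strict Implicit. Unset Printing Implicit Defensive.
Import Order.TTheory GRing.Theory Num.Theory.
Local Open Scope ring_scope.

Section Defs.
Variable R : realType.
Variable N : nat.

Notation perm := {perm 'I_N}.

Definition is_dist (P : {ffun perm -> R}) : Prop :=
  (forall s, 0 <= P s) /\ \sum_s P s = 1.

Definition prob (P : {ffun perm -> R}) (E : pred perm) : R := \sum_(s | E s) P s.

(* law of t ~ P conditioned on the event E (0 if the event is null) *)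
Definition cond (P : {ffun perm -> R}) (E : pred perm) : {ffun perm -> R} :=
  [ffun s => if E s then P s / prob P E else 0].

Definition unif : {ffun perm -> R} := [ffun _ => (#|perm|%:R)^-1].

(* S \subseteq parts(s) : s(x) = y for all (x,y) in S *)
Definition in_parts (S : {set 'I_N * 'I_N}) : pred perm :=
  fun s => [forall xy in S, s xy.1 == xy.2].

Definition is_part (S : {set 'I_N * 'I_N}) : Prop := exists pi : perm, in_parts S pi.

Definition distinct_parts (S S' : {set 'I_N * 'I_N}) : Prop :=
  (forall xy xy', xy \in S -> xy' \in S' -> xy.1 <> xy'.1) /\ is_part (S :|: S').

Definition beta_unif (Sb : {set 'I_N * 'I_N}) := cond unif (in_parts Sb).

Definition non_beta_uniform (Sb : {set 'I_N * 'I_N}) (delta : R)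
    (P : {ffun perm -> R}) : Prop :=
  forall S, is_part S ->
    prob P (in_parts S) <= 2 `^ (delta * #|S|%:R) * prob (beta_unif Sb) (in_parts S).

Definition pd_non_beta_uniform (Sb : {set 'I_N * 'I_N}) (p delta : R)
    (P : {ffun perm -> R}) : Prop :=
  exists S0, [/\ is_part S0, #|S0|%:R <= p, prob P (in_parts S0) = 1 &
    forall S, is_part S -> distinct_parts S S0 ->
      prob P (in_parts S) <=
        2 `^ (delta * #|S|%:R) * prob (cond (beta_unif Sb) (in_parts S0)) (in_parts S)].
End Defs.

From HB Require Import structures.
From mathcomp Require Import all_boot all_order all_algebra all_fingroup.
From mathcomp Require Import reals exp.
From mathcomp Require Import ring.
Import Order.TTheory GRing.Theory Num.Theory.
Local Open Scope ring_scope.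
Set Implicit Arguments. Unset Strict Implicit. Unset Printing Implicit Defensive.

(* Let mu <= t be a nonnegative sub-measure of total mass M.  Among the
   parts S with positive beta-uniform probability, pick S maximising
       ratio(S) = Pr_mu[S] / (2^((delta+delta')|S|) Pr_b[S]).
   Since ratio(S) >= ratio(empty) = M and Pr_mu[S] <= Pr_t[S] <= 2^(delta'|S|)
   Pr_b[S], we get M 2^(delta|S|) <= 1, so |S| <= 2m/delta whenever
   M > 2^(-2m).  Maximality against S' u S for every part S' distinct from S
   is exactly the (delta+delta') bound for mu conditioned on S.  Hence the
   conditional law of mu on "S in parts" is a (2m/delta, delta+delta') piece;
   we remove it from mu and recurse on the (strictly smaller) support until
   the remaining mass is at most c (greedy_decomposition).  Applied to t
   restricted to {h = r}, with c = 2^(-m) Pr[h(t) = r], and normalised by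
   Pr[h(t) = r], this gives the theorem. *)

Section Measures.
Variables (R : realType) (N : nat).
Local Notation perm := {perm 'I_N}.
Implicit Types (mu : {ffun perm -> R}) (E A B : pred perm).

Definition restrict mu E : {ffun perm -> R} := [ffun x => if E x then mu x else 0].

(* The points where mu does not vanish; greedy peeling shrinks it. *)
Definition supp mu : {set perm} := [set x | mu x != 0].

Lemma prob_ge0 mu E : (forall x, 0 <= mu x) -> 0 <= prob mu E.
Proof. by move=> mu_ge0; apply: sumr_ge0. Qed.

Lemma prob_neq0_witness mu E : prob mu E != 0 -> exists x, E x && (mu x != 0).
Proof.
case: (pickP (fun x => E x && (mu x != 0))) => [x Ex|none]; first by exists x.
by rewrite /prob big1 ?eqxx // => x Ex; move: (none x); rewrite Ex => /negbFE/eqP.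
Qed.

Lemma prob_cond mu A B : prob (cond mu A) B = prob mu (fun x => B x && A x) / prob mu A.
Proof.
rewrite /prob /cond; under eq_bigr do rewrite ffunE.
by rewrite -big_mkcondr -mulr_suml.
Qed.

Lemma cond_dist mu E : (forall x, 0 <= mu x) -> 0 < prob mu E ->
  is_dist (cond mu E) /\ prob (cond mu E) E = 1.
Proof.
move=> mu_ge0 E_gt0; have selfE : prob (cond mu E) E = 1.
  rewrite prob_cond (_ : prob mu _ = prob mu E) ?divff ?gt_eqF //.
  by apply: eq_bigl => x; rewrite andbb.
split=> //; split=> [x|].
  by rewrite /cond ffunE; case: ifP => _ //; rewrite divr_ge0 ?mu_ge0 ?ltW.
by change (prob (cond mu E) xpredT = 1); rewrite prob_cond divff ?gt_eqF.
Qed.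

Lemma restrict_ge0 mu E x : (forall y, 0 <= mu y) -> 0 <= restrict mu E x.
Proof. by move=> mu_ge0; rewrite ffunE; case: ifP. Qed.

Lemma restrict_le mu E x : (forall y, 0 <= mu y) -> restrict mu E x <= mu x.
Proof. by move=> mu_ge0; rewrite ffunE; case: ifP. Qed.

Lemma sum_restrict mu E : \sum_x restrict mu E x = prob mu E.
Proof. by rewrite /prob [RHS]big_mkcond; apply: eq_bigr => x _; rewrite ffunE. Qed.

Lemma cond_restrict mu E x : cond mu E x = restrict mu E x / prob mu E.
Proof. by rewrite !ffunE; case: ifP; rewrite ?mul0r. Qed.

Lemma restrict_split mu E x :
  prob mu E != 0 -> mu x = prob mu E * cond mu E x + restrict mu (predC E) x.
Proof.
move=> E_neq0; rewrite !ffunE /=; case: ifP => _; last by rewrite mulr0 add0r.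
by rewrite addr0 mulrCA divff ?mulr1.
Qed.

Lemma supp_restrict_lt mu E x :
  E x -> mu x != 0 -> (#|supp (restrict mu (predC E))| < #|supp mu|)%N.
Proof.
move=> Ex mux; apply: proper_card; apply/properP; split.
  by apply/subsetP => y; rewrite !inE /restrict ffunE; case: ifP; rewrite ?eqxx.
by exists x; rewrite !inE // /restrict ffunE /= Ex eqxx.
Qed.

Lemma unif_gt0 (x : perm) : 0 < unif R N x.
Proof. by rewrite ffunE invr_gt0 ltr0n; apply/card_gt0P; exists x. Qed.

Lemma unif_dist : is_dist (unif R N).
Proof.
split=> [x|]; first exact/ltW/unif_gt0.
under eq_bigr do rewrite ffunE.
rewrite sumr_const -[(_ ^-1) *+ _]mulr_natr cardT -cardE mulVf //.
by rewrite pnatr_eq0 -lt0n; apply/card_gt0P; exists 1%g.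
Qed.

Lemma scale_to_dist mu : (forall x, 0 <= mu x) ->
  exists F, is_dist F /\ forall x, mu x = (\sum_y mu y) * F x.
Proof.
move=> mu_ge0; have [mass0|mass_neq0] := eqVneq (\sum_y mu y) 0.
  exists (unif R N); split=> [|x]; first exact: unif_dist.
  by rewrite mass0 mul0r (psumr_eq0P _ mass0).
exists [ffun x => mu x / \sum_y mu y]; split=> [|x]; last by rewrite ffunE mulrCA divff ?mulr1.
split=> [x|]; first by rewrite ffunE divr_ge0 ?sumr_ge0.
by under eq_bigr do rewrite ffunE; rewrite -mulr_suml divff.
Qed.

Lemma mixture_mass k (F : 'I_k -> {ffun perm -> R}) (a : 'I_k -> R) nu mu :
  (forall i, is_dist (F i)) -> (forall x, mu x = \sum_i a i * F i x + nu x) ->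
  \sum_x mu x = \sum_i a i + \sum_x nu x.
Proof.
move=> F_dist mu_eq; under eq_bigr do rewrite mu_eq.
rewrite big_split /= exchange_big /=; congr (_ + _).
by apply: eq_bigr => i _; rewrite -mulr_sumr (proj2 (F_dist i)) mulr1.
Qed.

End Measures.

Section Parts.
Variables (R : realType) (N : nat).
Local Notation perm := {perm 'I_N}.

Lemma in_partsU (S S' : {set 'I_N * 'I_N}) (x : perm) :
  in_parts (S :|: S') x = in_parts S x && in_parts S' x.
Proof.
apply/forall_inP/andP => [allU|[allS allS']].
  by split; apply/forall_inP => xy xyS; apply: allU; rewrite inE xyS ?orbT.
by move=> xy; rewrite inE => /orP[]; [apply: (forall_inP allS) | apply: (forall_inP allS')].
Qed.

Lemma in_parts0 (x : perm) : in_parts set0 x.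
Proof. by apply/forall_inP => xy; rewrite inE. Qed.

Lemma prob_gt0_is_part (mu : {ffun perm -> R}) S : 0 < prob mu (in_parts S) -> is_part S.
Proof. by move/lt0r_neq0/prob_neq0_witness => [x /andP[Sx _]]; exists x. Qed.

Variable Sb : {set 'I_N * 'I_N}.
Hypothesis Sb_part : is_part Sb.

(* A part is realised with positive uniform probability, so the
   beta-uniform law is a genuine nonnegative conditional law. *)
Lemma prob_unif_part_gt0 : 0 < prob (unif R N) (in_parts Sb).
Proof.
have [pi Sb_pi] := Sb_part; rewrite /prob (bigD1 pi) //=.
by rewrite ltr_pwDl ?unif_gt0 // sumr_ge0 // => y _; exact/ltW/unif_gt0.
Qed.

Lemma beta_unif_ge0 (x : perm) : 0 <= beta_unif R Sb x.
Proof.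
rewrite ffunE; case: ifP => _ //.
by rewrite divr_ge0 ?ltW ?unif_gt0 ?prob_unif_part_gt0.
Qed.

Lemma prob_beta_unif_set0 : prob (beta_unif R Sb) (in_parts set0) = 1.
Proof.
rewrite prob_cond -[RHS](divff (lt0r_neq0 prob_unif_part_gt0)).
by congr (_ / _); apply: eq_bigl => x; rewrite in_parts0.
Qed.

End Parts.

Section PowersOfTwo.
Variable R : realType.

Lemma powR2D (x y : R) : 2 `^ (x + y) = 2 `^ x * 2 `^ y.
Proof. by rewrite powRD // pnatr_eq0 implybT. Qed.

Lemma powR2_le1 (x : R) : 2 `^ x <= 1 -> x <= 0.
Proof.
move=> /ln_le0; rewrite ln_powR pmulr_lle0 //.
by apply: ln_gt0; rewrite ltr1n.
Qed.

End PowersOfTwo.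

Section Peeling.
Variables (R : realType) (N : nat).
Local Notation perm := {perm 'I_N}.
Variables (Sb : {set 'I_N * 'I_N}) (t : {ffun perm -> R}) (delta' delta m : R).
Hypotheses (Sb_part : is_part Sb) (t_nbu : non_beta_uniform Sb delta' t).
Hypothesis delta_gt0 : 0 < delta.
Local Notation b := (beta_unif R Sb).
Local Notation eps := (delta + delta').
Implicit Types (mu : {ffun perm -> R}) (S : {set 'I_N * 'I_N}).

Definition ratio mu S :=
  prob mu (in_parts S) / (2 `^ (eps * #|S|%:R) * prob b (in_parts S)).

Definition best_part mu S :=
  0 < prob b (in_parts S) /\
  forall S', 0 < prob b (in_parts S') -> ratio mu S' <= ratio mu S.

(* A best part exists: the empty part has beta-uniform probability one. *)
Lemma best_part_exists mu : exists S, best_part mu S.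
Proof.
have set0_pos : 0 < prob b (in_parts set0) by rewrite prob_beta_unif_set0.
have [S S_pos S_max] :=
  @arg_maxP _ _ _ set0 (fun S => 0 < prob b (in_parts S)) (ratio mu) set0_pos.
by exists S; split.
Qed.

Lemma ratio_set0 mu : ratio mu set0 = \sum_x mu x.
Proof.
rewrite /ratio prob_beta_unif_set0 // cards0 mulr0 powRr0 !mulr1 divr1.
by apply: eq_bigl => x; rewrite in_parts0.
Qed.

Lemma ratio_denom_gt0 S : 0 < prob b (in_parts S) ->
  0 < 2 `^ (eps * #|S|%:R) * prob b (in_parts S).
Proof. by move=> S_pos; rewrite mulr_gt0 // powR_gt0. Qed.

Lemma best_part_ratio mu S : best_part mu S ->
  (\sum_x mu x) * (2 `^ (eps * #|S|%:R) * prob b (in_parts S)) <= prob mu (in_parts S).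
Proof.
move=> [S_pos S_max]; rewrite -ler_pdivlMr ?ratio_denom_gt0 // -ratio_set0.
by apply: S_max; rewrite prob_beta_unif_set0.
Qed.

Lemma best_part_mass mu S : best_part mu S -> 0 < \sum_x mu x ->
  0 < prob mu (in_parts S).
Proof.
move=> S_best mass_gt0; apply: lt_le_trans (best_part_ratio S_best).
by rewrite mulr_gt0 ?ratio_denom_gt0 //; case: S_best.
Qed.

Lemma best_part_size mu S : (forall x, mu x <= t x) -> best_part mu S ->
  2 `^ (- (2 * m)) < \sum_x mu x -> #|S|%:R <= 2 * m / delta.
Proof.
move=> mu_le S_best mass_big; have S_pos := proj1 S_best.
set M := \sum_x mu x in mass_big S_best *; set k : R := #|S|%:R.
have M_le : M * 2 `^ (eps * k) * prob b (in_parts S) <= 2 `^ (delta' * k) * prob b (in_parts S).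
  rewrite -mulrA; apply: le_trans (best_part_ratio S_best) _.
  apply: le_trans (t_nbu (prob_gt0_is_part S_pos)).
  by apply: ler_sum => x _; apply: mu_le.
have M_delta : M * 2 `^ (delta * k) <= 1.
  rewrite ler_pM2r // mulrDl powR2D mulrA in M_le.
  have pow_gt0 : 0 < 2 `^ (delta' * k) :> R by rewrite powR_gt0.
  by rewrite -(ler_pM2r pow_gt0) mul1r.
have : 2 `^ (delta * k - 2 * m) <= 1 :> R.
  rewrite powR2D mulrC; apply: le_trans M_delta.
  by rewrite ler_wpM2r ?powR_ge0 ?ltW.
by move/powR2_le1; rewrite subr_le0 ler_pdivlMr // mulrC.
Qed.

Lemma best_part_distinct mu S S' : (forall x, mu x <= t x) -> best_part mu S ->
  0 < prob mu (in_parts S) -> distinct_parts S' S ->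
  prob (cond mu (in_parts S)) (in_parts S') <=
    2 `^ (eps * #|S'|%:R) * prob (cond b (in_parts S)) (in_parts S').
Proof.
move=> mu_le [S_pos S_max] muS_pos [disj U_part]; set U := S' :|: S.
have cardU : #|U|%:R = #|S'|%:R + #|S|%:R :> R.
  rewrite cardsU (_ : S' :&: S = set0) ?cards0 ?subn0 ?natrD //.
  by apply/setP => xy; rewrite !inE; apply/negbTE/andP => -[xyS' xyS]; apply: (disj xy xy).
have probU P : prob P (fun x => in_parts S' x && in_parts S x) = prob P (in_parts U).
  by apply: eq_bigl => x; rewrite in_partsU.
rewrite (prob_cond mu) (prob_cond b) !probU.
have [U_pos|U_npos] := ltP 0 (prob b (in_parts U)).
  have := S_max U U_pos; rewrite /ratio cardU mulrDr powR2D.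
  rewrite ler_pdivrMr ?ratio_denom_gt0 ?mulr_gt0 ?powR_gt0 // => muU_le.
  rewrite ler_pdivrMr //; apply: le_trans muU_le _; rewrite le_eqVlt; apply/orP; left.
  have powS_neq0 : 2 `^ (eps * #|S|%:R) != 0 :> R by rewrite gt_eqF ?powR_gt0.
  by apply/eqP; field; rewrite powS_neq0 gt_eqF.
have U_null : prob b (in_parts U) = 0.
  by apply/eqP; rewrite eq_le U_npos prob_ge0 // => x; apply: beta_unif_ge0.
have muU_le : prob mu (in_parts U) <= 0.
  have := t_nbu (U_part : is_part U); rewrite U_null mulr0; apply: le_trans.
  by apply: ler_sum => x _; apply: mu_le.
by rewrite U_null mul0r mulr0 pmulr_lle0 // invr_gt0.
Qed.

Lemma peel_step mu : (forall x, 0 <= mu x) -> (forall x, mu x <= t x) ->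
  2 `^ (- (2 * m)) < \sum_x mu x ->
  exists S, [/\ 0 < prob mu (in_parts S), is_dist (cond mu (in_parts S)) &
    pd_non_beta_uniform Sb (2 * m / delta) eps (cond mu (in_parts S))].
Proof.
move=> mu_ge0 mu_le mass_big; have [S S_best] := best_part_exists mu.
have muS_pos : 0 < prob mu (in_parts S).
  by apply: best_part_mass S_best _; apply: lt_trans mass_big; rewrite powR_gt0.
have [cond_is_dist cond_S] := cond_dist mu_ge0 muS_pos.
exists S; split=> //; exists S; split=> //.
- exact: prob_gt0_is_part (proj1 S_best).
- exact: best_part_size S_best mass_big.
- by move=> S' _; apply: best_part_distinct.
Qed.

Lemma greedy_decomposition (c : R) mu : 2 `^ (- (2 * m)) <= c ->
  (forall x, 0 <= mu x) -> (forall x, mu x <= t x) ->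
  exists k (F : 'I_k -> {ffun perm -> R}) (a : 'I_k -> R) (nu : {ffun perm -> R}),
  [/\ forall i, is_dist (F i) /\ pd_non_beta_uniform Sb (2 * m / delta) eps (F i),
      forall i, 0 <= a i, forall x, 0 <= nu x, \sum_x nu x <= c &
      forall x, mu x = \sum_i a i * F i x + nu x].
Proof.
move=> c_big; have [n] := ubnP #|supp mu|.
elim: n mu => // n IH mu supp_lt mu_ge0 mu_le.
have [mass_small|mass_big] := leP (\sum_x mu x) c.
  exists 0%N, (fun=> mu), (fun=> 0), mu.
  by split=> [[]|[]|//|//|x] //; rewrite big_ord0 add0r.
have [S [muS_pos S_dist S_pd]] := peel_step mu_ge0 mu_le (le_lt_trans c_big mass_big).
have [x /andP[Sx mux]] := prob_neq0_witness (lt0r_neq0 muS_pos).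
have [k [F [a [nu [F_ok a_ge0 nu_ge0 nu_small mu_rest]]]]] :=
  IH _ (leq_trans (supp_restrict_lt Sx mux) supp_lt)
     (fun y => restrict_ge0 _ _ mu_ge0) (fun y => le_trans (restrict_le _ _ mu_ge0) (mu_le y)).
exists k.+1, (fun i => oapp F (cond mu (in_parts S)) (unlift ord0 i)),
  (fun i => oapp a (prob mu (in_parts S)) (unlift ord0 i)), nu.
split=> // [i|i|y]; [by case: unlift | by case: unlift => [j|] //=; apply: ltW |].
rewrite big_ord_recl unlift_none /=; under eq_bigr do rewrite liftK /=.
by rewrite -addrA -mu_rest; apply: restrict_split; rewrite gt_eqF.
Qed.

End Peeling.

Unset Implicit Arguments.
Theorem mainTheorem10 (R : realType) (n : nat)
    (Sb : {set 'I_(2 ^ n) * 'I_(2 ^ n)}) (t : {ffun {perm 'I_(2 ^ n)} -> R})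
    (delta' delta m : R) (T : eqType) (h : {perm 'I_(2 ^ n)} -> T) (r : T) :
  is_part Sb -> is_dist t -> non_beta_uniform Sb delta' t ->
  0 < delta ->
  2 `^ (- m) <= prob t (fun s => h s == r) ->
  let s := cond t (fun s => h s == r) in
  exists (k : nat) (F : 'I_k -> {ffun {perm 'I_(2 ^ n)} -> R})
         (F' : {ffun {perm 'I_(2 ^ n)} -> R}) (alpha : 'I_k -> R) (gamma' : R),
    [/\ (forall i, is_dist (F i) /\
          pd_non_beta_uniform Sb (2 * m / delta) (delta + delta') (F i)),
        is_dist F',
        ((forall i, 0 <= alpha i) /\ 0 <= gamma'),
        (\sum_i alpha i) + gamma' = 1 /\ gamma' <= 2 `^ (- m) &
        (forall sg, s sg = (\sum_i alpha i * F i sg) + gamma' * F' sg)].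
Proof.
move=> Sb_part [t_ge0 _] t_nbu delta_gt0; set E := fun s => h s == r; set P := prob t E.
move=> P_big s; have P_gt0 : 0 < P by apply: lt_le_trans P_big; rewrite powR_gt0.
(* Peel t restricted to E, leaving a remainder of mass at most 2^(-m) P. *)
have threshold : 2 `^ (- (2 * m)) <= 2 `^ (- m) * P.
  rewrite (_ : - (2 * m) = - m + - m) ?powR2D ?ler_wpM2l ?powR_ge0 //.
  by rewrite mulrDl mul1r opprD.
have [k [F [a [nu [F_ok a_ge0 nu_ge0 nu_small mu_eq]]]]] :=
  greedy_decomposition Sb_part t_nbu delta_gt0 threshold
    (fun x => restrict_ge0 E x t_ge0) (fun x => restrict_le E x t_ge0).
have [F' [F'_dist nu_eq]] := scale_to_dist nu_ge0.
set V := \sum_x nu x in nu_small nu_eq.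
have mass_eq : \sum_i a i + V = P.
  by rewrite -(mixture_mass (fun i => proj1 (F_ok i)) mu_eq) sum_restrict.
(* Normalising by P = Pr[h(t) = r] turns this into the law of s. *)
exists k, F, F', (fun i => a i / P), (V / P); split=> //.
- have V_ge0 : 0 <= V by apply: sumr_ge0 => x _; apply: nu_ge0.
  by split=> [i|]; apply: divr_ge0 (ltW P_gt0).
- by rewrite -mulr_suml -mulrDl mass_eq divff ?gt_eqF // ler_pdivrMr.
move=> x; rewrite /s cond_restrict mu_eq nu_eq mulrDl mulr_suml mulrAC.
by congr (_ + _); apply: eq_bigr => i _; rewrite mulrAC.
Qed.
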